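(* Let $M$ be a matroid on a finite set $S$ with primary flag $T_0\subset\cdots\subset T_k$. Then the set $\mathcal F(M)$ of free separators of $M$ equals $\bigcup_{i=1}^k [T_{i-1},T_i]\cap\mathcal F(M)$, and for each $1\leq i\leq k$, $$[T_{i-1},T_i]\cap \mathcal F(M)=\begin{cases}[T_{i-1},T_i] & \text{if } T_i \text{ covers } T_{i-1} \text{ in } \mathcal D(M),\\ \{T_{i-1},T_i\} & \text{otherwise},\end{cases}$$ so that each such interval is a Boolean algebra.
   Context: A cyclic flat of a matroid is a flat that is a union of circuits. A subset $A\subseteq S$ is a free separator of $M$ if every cyclic flat of $M$ is comparable to $A$ by inclusion; $\mathcal F(M)$ is the set of free separators ordered by inclusion. $\mathcal D(M)$ is the complete sublattice of the Boolean algebra $2^S$ generated by all cyclic flats of $M$ (it contains $\emptyset$ and $S$). A pinchpoint of a poset is an element comparable to every element. The primary flag of $M$ is the chain $T_0\subset\cdots\subset T_k$ of all pinchpoints of $\mathcal D(M)$. For $A\subseteq B\subseteq S$, $[A,B]=\{U\subseteq S: A\subseteq U\subseteq B\}$. *)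

From mathcomp Require Import all_boot.
Set Implicit Arguments. Unset Strict Implicit. Unset Printing Implicit Defensive.

Section Matroid.
Variable S : finType.
Variable I : {set {set S}}.  (* the family of independent sets *)

Definition matroid : Prop :=
  [/\ set0 \in I,
      (forall A B : {set S}, B \in I -> A \subset B -> A \in I) &
      (forall A B : {set S}, A \in I -> B \in I -> #|A| < #|B| ->
          exists2 e, e \in B :\: A & e |: A \in I)].

Definition mrank (X : {set S}) : nat := \max_(J in I | J \subset X) #|J|.

Definition flat (X : {set S}) : Prop :=
  forall e, e \notin X -> mrank X < mrank (e |: X).

Definition circuit (C : {set S}) : Prop :=
  C \notin I /\ (forall D : {set S}, D \proper C -> D \in I).

Definition cyclic (X : {set S}) : Prop :=
  forall e, e \in X -> exists C, [/\ circuit C, e \in C & C \subset X].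

Definition cyclic_flat (X : {set S}) : Prop := flat X /\ cyclic X.

Definition free_separator (A : {set S}) : Prop :=
  forall Z, cyclic_flat Z -> Z \subset A \/ A \subset Z.

(* D(M): smallest family containing the cyclic flats, set0, setT,
   closed under union and intersection (complete sublattice of 2^S
   generated by cyclic flats; S finite so binary closure suffices) *)
Inductive inD : {set S} -> Prop :=
  | inD_cf Z : cyclic_flat Z -> inD Z
  | inD_0 : inD set0
  | inD_T : inD setT
  | inD_U X Y : inD X -> inD Y -> inD (X :|: Y)
  | inD_I X Y : inD X -> inD Y -> inD (X :&: Y).

Definition pinchpoint (A : {set S}) : Prop :=
  inD A /\ (forall B, inD B -> A \subset B \/ B \subset A).

Definition coversD (X Y : {set S}) : Prop :=
  [/\ inD X, inD Y, X \proper Y &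
      forall U, inD U -> X \proper U -> U \proper Y -> False].

End Matroid.

From mathcomp Require Import all_boot.
From Stdlib Require Import Classical.

(* A free separator A is comparable not only with the cyclic flats but with
   every member of D(M), in particular with every term of the primary flag,
   so it lies in some interval [T_(i-1), T_i].  Moreover the largest member
   of D(M) below A and the least one above A are pinchpoints.  Hence if A lies
   strictly inside [T_(i-1), T_i], a member of D(M) strictly between T_(i-1)
   and T_i would, being comparable with A, sandwich a pinchpoint strictly
   between T_(i-1) and T_i as well; so T_i covers T_(i-1).  Conversely, when
   T_i covers T_(i-1), every cyclic flat lies below T_(i-1), above T_i, or is
   one of them, hence is comparable with every set in between. *)

Set Implicit Arguments.
Unset Strict Implicit.
Unset Printing Implicit Defensive.

Section FiniteSetFamilies.
Variable S : finType.

Lemma union_closed_greatest (P : {set S} -> Prop) (X : {set S}) :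
  (forall Y Z, P Y -> P Z -> P (Y :|: Z)) -> P X ->
  exists2 L, P L & forall Y, P Y -> Y \subset L.
Proof.
move=> PU; have [n] := ubnP #|~: X|; elim: n X => // n IH X ltXn PX.
have [Xgreatest | /not_all_ex_not[Y notYgreatest]] :=
  classic (forall Y, P Y -> Y \subset X); first by exists X.
have [PY /negP notYX] := imply_to_and _ _ notYgreatest.
apply: (IH (X :|: Y) _ (PU _ _ PX PY)).
by rewrite -ltnS (leq_trans _ ltXn) // ltnS proper_card // properC properUl.
Qed.

Lemma intersection_closed_least (P : {set S} -> Prop) (X : {set S}) :
  (forall Y Z, P Y -> P Z -> P (Y :&: Z)) -> P X ->
  exists2 L, P L & forall Y, P Y -> L \subset Y.
Proof.
move=> PI PX.
have [||L PCL Lgreatest] := @union_closed_greatest (fun Y => P (~: Y)) (~: X).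
- by move=> Y Z PY PZ; rewrite setCU; apply: PI.
- by rewrite setCK.
exists (~: L) => // Y PY.
by rewrite -setCS setCK; apply: Lgreatest; rewrite setCK.
Qed.

Lemma comparable_chain_interval (T : nat -> {set S}) (A : {set S}) k :
  0 < k -> T 0 \subset A -> A \subset T k ->
  (forall j, j < k -> T j \subset A \/ A \subset T j) ->
  exists2 i, 0 < i <= k & (T i.-1 \subset A) && (A \subset T i).
Proof.
elim: k => // k IH _ T0A ATk cmp.
have [TkA | notTkA] := boolP (T k \subset A); first by exists k.+1; rewrite //= TkA.
have ATk' : A \subset T k by case: (cmp k (ltnSn k)) => // TkA; rewrite TkA in notTkA.
have k_gt0 : 0 < k by case: k {IH ATk cmp} notTkA ATk' => //; rewrite T0A.
have [i /andP[i_gt0 leik] TiA] := IH k_gt0 T0A ATk' (fun j ltjk => cmp j (ltnW ltjk)).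
by exists i; rewrite // i_gt0 ltnW.
Qed.

End FiniteSetFamilies.

Section FreeSeparators.
Variables (S : finType) (I : {set {set S}}).

Lemma free_separator_inD (A B : {set S}) :
  free_separator I A -> inD I B -> B \subset A \/ A \subset B.
Proof.
move=> freeA; elim=> {B} [Z /freeA //| | | X Y _ cmpX _ cmpY | X Y _ cmpX _ cmpY].
- by left; apply: sub0set.
- by right; apply: subsetT.
- case: cmpX cmpY => [XA|AX] [YA|AY].
  + by left; rewrite subUset XA YA.
  + by right; rewrite (subset_trans AY) ?subsetUr.
  + by right; rewrite (subset_trans AX) ?subsetUl.
  + by right; rewrite (subset_trans AX) ?subsetUl.
- case: cmpX cmpY => [XA|AX] [YA|AY].
  + by left; rewrite (subset_trans _ XA) ?subsetIl.
  + by left; rewrite (subset_trans _ XA) ?subsetIl.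
  + by left; rewrite (subset_trans _ YA) ?subsetIr.
  + by right; rewrite subsetI AX AY.
Qed.

Lemma pinchpoint_free_separator (A : {set S}) :
  pinchpoint I A -> free_separator I A.
Proof. by move=> [_ pinchA] Z cfZ; case: (pinchA Z (inD_cf cfZ)); [right | left]. Qed.

Lemma free_separator_pinchpoint_below (A B : {set S}) :
  free_separator I A -> inD I B -> B \subset A ->
  exists2 P, pinchpoint I P & (B \subset P) && (P \subset A).
Proof.
move=> freeA DB BA.
have [||L [DL LA] Lgreatest] :=
  @union_closed_greatest _ (fun X => inD I X /\ X \subset A) B.
- by move=> X Y [DX XA] [DY YA]; split; [apply: inD_U | rewrite subUset XA YA].
- by [].
exists L; last by rewrite LA Lgreatest.
split=> // C DC; case: (free_separator_inD freeA DC) => [CA | AC].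
  by right; apply: Lgreatest.
by left; apply: subset_trans AC.
Qed.

Lemma free_separator_pinchpoint_above (A B : {set S}) :
  free_separator I A -> inD I B -> A \subset B ->
  exists2 P, pinchpoint I P & (A \subset P) && (P \subset B).
Proof.
move=> freeA DB AB.
have [||U [DU AU] Uleast] :=
  @intersection_closed_least _ (fun X => inD I X /\ A \subset X) B.
- by move=> X Y [DX AX] [DY AY]; split; [apply: inD_I | rewrite subsetI AX AY].
- by [].
exists U; last by rewrite AU Uleast.
split=> // C DC; case: (free_separator_inD freeA DC) => [CA | AC].
  by right; apply: subset_trans AU.
by left; apply: Uleast.
Qed.

Lemma coversD_pinchpoints_free_separator (P Q A : {set S}) :
  pinchpoint I P -> pinchpoint I Q -> coversD I P Q ->
  P \subset A -> A \subset Q -> free_separator I A.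
Proof.
move=> [_ pinchP] [_ pinchQ] [_ _ _ noneBetween] PA AQ Z cfZ.
have DZ := inD_cf cfZ.
case: (pinchP Z DZ) => [PZ | ZP]; last by left; apply: subset_trans PA.
case: (pinchQ Z DZ) => [QZ | ZQ]; first by right; apply: subset_trans QZ.
have [<- | neqPZ] := eqVneq P Z; first by left.
have [-> | neqZQ] := eqVneq Z Q; first by right.
by case: (noneBetween Z DZ); rewrite properEneq ?neqPZ ?neqZQ.
Qed.

End FreeSeparators.

Section PrimaryFlag.
Variables (S : finType) (I : {set {set S}}) (k : nat) (T : nat -> {set S}).
Hypothesis flag_chain : forall i, i < k -> T i \proper T i.+1.
Hypothesis flag_pinchpoints :
  forall A : {set S}, pinchpoint I A <-> exists2 i, i <= k & A = T i.

Lemma flag_mono i j : i <= j -> j <= k -> T i \subset T j.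
Proof.
move=> leij; elim: j leij => [|j IH]; first by rewrite leqn0 => /eqP->.
rewrite leq_eqVlt => /predU1P[-> // | ltij ltjk].
exact: subset_trans (IH ltij (ltnW ltjk)) (proper_sub (flag_chain ltjk)).
Qed.

Lemma flag_pinchpoint i : i <= k -> pinchpoint I (T i).
Proof. by move=> leik; apply/flag_pinchpoints; exists i. Qed.

Lemma flag_first : T 0 = set0.
Proof.
have [|j lejk set0_Tj] := proj1 (flag_pinchpoints set0).
  by split=> [|B _]; [apply: inD_0 | left; apply: sub0set].
by apply/eqP; rewrite -subset0 set0_Tj flag_mono.
Qed.

Lemma flag_last : T k = setT.
Proof.
have [|j lejk setT_Tj] := proj1 (flag_pinchpoints setT).
  by split=> [|B _]; [apply: inD_T | right; apply: subsetT].
by apply/eqP; rewrite eqEsubset subsetT setT_Tj flag_mono.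
Qed.

Lemma flag_length_gt0 : 0 < #|S| -> 0 < k.
Proof.
move=> S_gt0; case: (posnP k) => // k0.
by move: S_gt0; rewrite -cardsT -flag_last k0 flag_first cards0.
Qed.

Lemma flag_interval_proper i : 0 < i <= k -> T i.-1 \proper T i.
Proof. by case: i => // i /andP[_ ltik]; apply: flag_chain. Qed.

Lemma no_pinchpoint_strictly_inside i (P : {set S}) : 0 < i <= k ->
  pinchpoint I P -> T i.-1 \proper P -> P \proper T i -> False.
Proof.
move=> /andP[i_gt0 leik] /flag_pinchpoints[j lejk ->] ltTP ltPT.
have [leji | ltij] := leqP j i.-1.
  by move: ltTP; rewrite properE (flag_mono leji) ?andbF // (leq_trans (leq_pred i)).
by move: ltPT; rewrite properE (flag_mono _ lejk) ?andbF // -(prednK i_gt0).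
Qed.

Lemma free_separator_flag_interval (A : {set S}) : 0 < k ->
  free_separator I A -> exists2 i, 0 < i <= k & (T i.-1 \subset A) && (A \subset T i).
Proof.
move=> k_gt0 freeA; apply: comparable_chain_interval => //.
- by rewrite flag_first sub0set.
- by rewrite flag_last subsetT.
move=> j ltjk; have [DTj _] := flag_pinchpoint (ltnW ltjk).
by case: (free_separator_inD freeA DTj); [left | right].
Qed.

Lemma free_separator_strictly_inside_coversD i (A : {set S}) : 0 < i <= k ->
  free_separator I A -> T i.-1 \proper A -> A \proper T i ->
  coversD I (T i.-1) (T i).
Proof.
move=> i_range freeA ltTA ltAT; have /andP[_ leik] := i_range.
have [DTi1 _] := flag_pinchpoint (leq_trans (leq_pred i) leik).
have [DTi _] := flag_pinchpoint leik.
split=> // [|U DU ltTU ltUT]; first exact: flag_interval_proper.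
case: (free_separator_inD freeA DU) => [UA | AU].
- have [P pinchP /andP[UP PA]] := free_separator_pinchpoint_below freeA DU UA.
  apply: (no_pinchpoint_strictly_inside i_range pinchP).
    exact: proper_sub_trans ltTU UP.
  exact: sub_proper_trans PA ltAT.
- have [P pinchP /andP[AP PU]] := free_separator_pinchpoint_above freeA DU AU.
  apply: (no_pinchpoint_strictly_inside i_range pinchP).
    exact: proper_sub_trans ltTA AP.
  exact: sub_proper_trans PU ltUT.
Qed.

End PrimaryFlag.

Theorem proposition6p15 (S : finType) (I : {set {set S}}) (HM : matroid I)
  (HS : 0 < #|S|) (k : nat) (T : nat -> {set S})
  (Hchain : forall i, i < k -> T i \proper T i.+1)
  (Hflag : forall A : {set S}, pinchpoint I A <-> exists2 i, i <= k & A = T i) :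
  (forall A : {set S}, free_separator I A <->
     exists i, [/\ 1 <= i <= k, T i.-1 \subset A, A \subset T i
                  & free_separator I A]) /\
  (forall i, 1 <= i <= k -> forall A : {set S},
     ((T i.-1 \subset A) && (A \subset T i) /\ free_separator I A) <->
     ((coversD I (T i.-1) (T i) -> (T i.-1 \subset A) && (A \subset T i)) /\
      (~ coversD I (T i.-1) (T i) -> A = T i.-1 \/ A = T i))).
Proof.
have k_gt0 := flag_length_gt0 Hchain Hflag HS.
have pinchT := flag_pinchpoint Hflag.
split=> [A | i i_range A].
  split=> [freeA | [i []] //].
  have [i i_range /andP[TA AT]] := free_separator_flag_interval Hchain Hflag k_gt0 freeA.
  by exists i.
have /andP[_ leik] := i_range; have lei1k := leq_trans (leq_pred i) leik.
split=> [[/andP[TA AT] freeA] | [inside_of_cover endpoint_of_noncover]].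
  split=> [_ | noncover]; first by rewrite TA AT.
  have [<- | neqTA] := eqVneq (T i.-1) A; first by left.
  have [-> | neqAT] := eqVneq A (T i); first by right.
  case: noncover; apply: (free_separator_strictly_inside_coversD Hchain Hflag i_range freeA).
    by rewrite properEneq neqTA.
  by rewrite properEneq neqAT.
have [cover | noncover] := classic (coversD I (T i.-1) (T i)).
  have /andP[TA AT] := inside_of_cover cover; split; first by rewrite TA AT.
  exact: coversD_pinchpoints_free_separator (pinchT _ lei1k) (pinchT _ leik) cover TA AT.
have TT := proper_sub (flag_interval_proper Hchain i_range).
case: (endpoint_of_noncover noncover) => ->; rewrite subxx TT; split=> //.
  exact/pinchpoint_free_separator/pinchT.
exact/pinchpoint_free_separator/pinchT.
Qed.
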